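(* Let $(\Theta,d)$ be a totally bounded semimetric space. If $(X^\theta)_{\theta\in\Theta}$ is a nearly sub-Gaussian random field w.r.t. $d$, then there is some $\varepsilon>1$ such that $(X^\theta)_{\theta\in\Theta}$ is a sub-Gaussian random field w.r.t. $\overline d:=\varepsilon\cdot d$.
   Context: A centered stochastic process $(X^\theta)_{\theta\in\Theta}$ is a nearly sub-Gaussian random field w.r.t. a semimetric $d$ if there is $C\ge1$ such that $\mathbb E[\exp(\lambda(X^\theta-X^\vartheta))]\le C\exp(\lambda^2d(\theta,\vartheta)^2/2)$ for all $\theta,\vartheta\in\Theta$ and $\lambda>0$; it is a sub-Gaussian random field w.r.t. $d$ if this holds with $C=1$. *)

From HB Require Import structures.
From mathcomp Require Import all_boot all_order all_algebra.
From mathcomp Require Import all_classical all_reals all_analysis.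
Set Implicit Arguments. Unset Strict Implicit. Unset Printing Implicit Defensive.
Import Order.TTheory GRing.Theory Num.Theory.

Local Open Scope ring_scope.

Definition semimetric (Θ : Type) (R : realType) (d : Θ -> Θ -> R) : Prop :=
  [/\ forall x y, 0 <= d x y,
      forall x, d x x = 0,
      forall x y, d x y = d y x &
      forall x y z, d x z <= d x y + d y z].

Definition totally_bounded_sm (Θ : Type) (R : realType) (d : Θ -> Θ -> R) : Prop :=
  forall e : R, 0 < e -> exists s : seq Θ, forall x, has (fun t => d x t < e) s.

Definition centered_process d (T : measurableType d) (R : realType)
  (P : probability T R) (Θ : Type) (X : Θ -> {RV P >-> R}) : Prop :=
  forall th, P.-integrable setT (EFin \o X th) /\ ('E_P[X th] = 0)%E.

Definition nearly_subgaussian_field d (T : measurableType d) (R : realType)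
  (P : probability T R) (Θ : Type) (X : Θ -> {RV P >-> R}) (dd : Θ -> Θ -> R) : Prop :=
  centered_process X /\
  exists C : R, 1 <= C /\
    forall th vt (l : R), 0 < l ->
      (\int[P]_x (expR (l * (X th x - X vt x)))%:E
        <= (C * expR (l ^+ 2 * dd th vt ^+ 2 / 2))%:E)%E.

Definition subgaussian_field d (T : measurableType d) (R : realType)
  (P : probability T R) (Θ : Type) (X : Θ -> {RV P >-> R}) (dd : Θ -> Θ -> R) : Prop :=
  centered_process X /\
    forall th vt (l : R), 0 < l ->
      (\int[P]_x (expR (l * (X th x - X vt x)))%:E
        <= (expR (l ^+ 2 * dd th vt ^+ 2 / 2))%:E)%E.

(* C * expR (l^2 d^2 / 2) tends to C, not 1, as l -> 0, so only small l * d
   needs work.  There one uses that the increment Z is centered: the pointwise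
   estimate expR u <= 1 + u + 32 t^-2 (expR (2 t u) + expR (-2 t u)), t >= 1,
   integrated with u = l Z and t = 1 / (l d), kills the linear term, while the
   hypothesis at scale 2 / d bounds both exponential tails by C e^2; hence
   E[expR (l Z)] <= 1 + 64 C e^2 (l d)^2 (for d = 0, let t -> oo).  For l * d >= 1
   the factor C is absorbed by enlarging d, as C expR (x / 2) <= expR (eps^2 x / 2)
   once x >= 1. *)
From HB Require Import structures.
From mathcomp Require Import all_boot all_order all_algebra.
From mathcomp Require Import all_classical all_reals all_analysis.
From mathcomp Require Import measurable_realfun ring lra.
Import Order.TTheory GRing.Theory Num.Theory.
Local Open Scope ring_scope.

Section ExpInequalities.
Variable R : realType.

Lemma sqr_le_4expR_norm (x : R) : x ^+ 2 <= 4 * expR `|x|.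
Proof.
have half_le := expR_ge1Dx (`|x| / 2).
have sq : expR `|x| = expR (`|x| / 2) ^+ 2 by rewrite -expRM_natr; congr expR; lra.
have : x ^+ 2 = `|x| ^+ 2 by rewrite real_normK ?num_real.
have := normr_ge0 x; nra.
Qed.

Lemma expR_sub1Dx_le (u : R) : expR u - 1 - u <= 4 * u ^+ 2 * (1 + expR u).
Proof.
have exp_gt0 := expR_gt0 u.
have [u_small|u_large] := lerP u (1 / 2); last first.
  have : 0 <= (4 * u ^+ 2 - 1) * (1 + expR u) by apply: mulr_ge0; nra.
  nra.
have expN_ge := expR_ge1Dx (- u).
have exp_ge := expR_ge1Dx u.
have expK : expR u * expR (- u) = 1 by rewrite expRxMexpNx_1.
have expN_gt0 : 0 < expR (- u) by apply: expR_gt0.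
have exp_1B : expR u * (1 - u) <= 1 by nra.
have : expR u - 1 - u <= u * (expR u - 1) by nra.
have [u0|u0] := lerP 0 u.
  have : u * (expR u - 1 - u * expR u) <= 0 by apply: mulr_ge0_le0; nra.
  nra.
have : u * (expR u - 1 - u) <= 0 by apply: mulr_le0_ge0; nra.
nra.
Qed.

Lemma expR_le_1Dx_tails (u t : R) : 1 <= t ->
  expR u <= 1 + u + 32 / t ^+ 2 * (expR (2 * t * u) + expR (2 * t * - u)).
Proof.
move=> t1.
have t2 : 0 < t ^+ 2 by nra.
have au : 0 <= `|u| by [].
have tails : expR (2 * t * `|u|) <= expR (2 * t * u) + expR (2 * t * - u).
  have := expR_gt0 (2 * t * u); have := expR_gt0 (2 * t * - u).
  by have [u0|u0] := lerP 0 u; [rewrite ger0_norm | rewrite ltr0_norm]; lra.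
have sq : expR (2 * t * `|u|) = expR (t * `|u|) ^+ 2.
  by rewrite -expRM_natr; congr expR; lra.
have exp_le : expR u <= expR (t * `|u|).
  by rewrite ler_expR; have := ler_norm u; nra.
have exp_ge1 : 1 <= expR (t * `|u|) by rewrite -expR0 ler_expR; nra.
have sqr_le := sqr_le_4expR_norm (t * u).
rewrite normrM (ger0_norm (_ : 0 <= t)) ?exprMn in sqr_le; last lra.
have key : 4 * u ^+ 2 * (1 + expR u) <= 32 / t ^+ 2 * expR (2 * t * `|u|).
  by rewrite sq mulrAC [in X in _ <= X]mulrAC ler_pdivlMr //; nra.
have := expR_sub1Dx_le u.
have : 0 <= 32 / t ^+ 2 by apply: divr_ge0 => //; lra.
nra.
Qed.

Lemma mulr_expR_le_expR (C a x : R) : 0 <= C -> 1 <= x -> 1 + 2 * C <= a ->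
  C * expR (x / 2) <= expR (a * x / 2).
Proof.
move=> C0 x1 aC.
have CeC : C <= expR C by have := expR_ge1Dx C; lra.
apply: (le_trans (ler_wpM2r (ltW (expR_gt0 _)) CeC)).
by rewrite -expRD ler_expR; nra.
Qed.

Lemma lee_of_forall_le_addr_divr_sqr (x : \bar R) (a K l : R) : 0 <= K ->
  (forall s, l <= s -> (x <= (a + K / s ^+ 2)%:E)%E) -> (x <= a%:E)%E.
Proof.
move=> K0 bound; apply/lee_addgt0Pr => e e0.
pose s := `|l| + 1 + K / e.
have Ke : K / e * e = K by rewrite divfK // gt_eqF.
have Ke0 : 0 <= K / e by apply: divr_ge0 => //; lra.
have s1 : 1 <= s by rewrite /s; have := normr_ge0 l; lra.
have ls : l <= s by rewrite /s; have := ler_norm l; lra.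
apply: (le_trans (bound s ls)); rewrite -EFinD lee_fin lerD2l.
rewrite ler_pdivrMr; last by apply: exprn_gt0; lra.
have : K <= e * s.
  by rewrite /s !mulrDr [e * (K / e)]mulrC Ke; have := normr_ge0 l; nra.
nra.
Qed.

End ExpInequalities.

Lemma integrable_ge0_integral_le d (T : measurableType d) (R : realType)
    (mu : {measure set T -> \bar R}) (g : T -> R) (c : R) :
  measurable_fun setT g -> (forall x, 0 <= g x) ->
  (\int[mu]_x (g x)%:E <= c%:E)%E -> mu.-integrable setT (EFin \o g).
Proof.
move=> mg g0 gc; apply/integrableP; split; first exact/measurable_EFinP.
rewrite (eq_integral (fun x => (g x)%:E)); last by move=> x _ /=; rewrite ger0_norm.
exact: le_lt_trans gc (ltry _).
Qed.

Section CenteredMgf.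
Context d (T : measurableType d) (R : realType) (P : probability T R).
Variable f : T -> R.
Hypothesis f_int : P.-integrable setT (EFin \o f).
Hypothesis f_centered : (\int[P]_x (f x)%:E = 0)%E.

Let f_meas : measurable_fun setT f.
Proof. exact/measurable_EFinP/(measurable_int P). Qed.

Let expR_scale_meas (a : R) : measurable_fun setT (fun x => expR (a * f x)).
Proof. by apply: measurableT_comp => //; apply: measurable_funM. Qed.

Lemma integral_1Dscale (l : R) : (\int[P]_x (1 + l * f x)%:E = 1%:E)%E.
Proof.
have lf_int := integrableZl measurableT l f_int.
have one_int := finite_measure_integrable_cst P 1 measurableT.
rewrite (eq_integral (fun x => (1%:E + l%:E * (f x)%:E)%E)); last first.
  by move=> x _ /=; rewrite EFinD EFinM.
rewrite integralD // integralZl // f_centered mule0 adde0.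
by rewrite integral_cst // mul1e; exact: probability_setT.
Qed.

Lemma mgf_le_1Dsqr (K s l : R) : 0 < l -> l <= s ->
  (\int[P]_x (expR (2 * s * f x))%:E <= K%:E)%E ->
  (\int[P]_x (expR (2 * s * - f x))%:E <= K%:E)%E ->
  (\int[P]_x (expR (l * f x))%:E <= (1 + 64 * K * (l / s) ^+ 2)%:E)%E.
Proof.
move=> l0 ls mgf_pos mgf_neg.
have s0 : 0 < s by apply: lt_le_trans ls.
pose A x := expR (2 * s * f x).
pose B x := expR (2 * s * - f x).
have A_int : P.-integrable setT (EFin \o A).
  apply: integrable_ge0_integral_le mgf_pos => // x; exact: expR_ge0.
have B_int : P.-integrable setT (EFin \o B).
  apply: integrable_ge0_integral_le mgf_neg => [|x]; last exact: expR_ge0.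
  by under eq_fun do rewrite mulrN -mulNr; exact: expR_scale_meas.
pose c := 32 * (l / s) ^+ 2.
have c0 : 0 <= c by rewrite /c mulr_ge0 ?sqr_ge0.
have pointwise x : expR (l * f x) <= (1 + l * f x) + c * (A x + B x).
  have := @expR_le_1Dx_tails R (l * f x) (s / l).
  rewrite ler_pdivlMr // mul1r => /(_ ls).
  have -> : 32 / (s / l) ^+ 2 = c by rewrite /c; field; rewrite !gt_eqF.
  rewrite mulrN; have -> : 2 * (s / l) * (l * f x) = 2 * s * f x.
    by field; rewrite gt_eqF.
  by rewrite /A /B mulrN.
have lin_int : P.-integrable setT (fun x => (1 + l * f x)%:E).
  move: (integrableD measurableT (finite_measure_integrable_cst P 1 measurableT)
    (integrableZl measurableT l f_int)).
  by apply: eq_integrable => // x _; rewrite /= EFinD EFinM.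
have tail_int : P.-integrable setT (fun x => (c * (A x + B x))%:E).
  move: (integrableZl measurableT c (integrableD measurableT A_int B_int)).
  by apply: eq_integrable => // x _; rewrite /= EFinM EFinD.
have tail_le : (\int[P]_x (c * (A x + B x))%:E <= (c * (2 * K))%:E)%E.
  rewrite (eq_integral (fun x => (c%:E * ((A x)%:E + (B x)%:E))%E)); last first.
    by move=> x _ /=; rewrite EFinM EFinD.
  rewrite integralZl ?integralD //; last exact: integrableD.
  rewrite (EFinM c) lee_wpmul2l ?lee_fin // mulr_natl mulr2n EFinD.
  exact: leeD.
apply: (le_trans (ge0_le_integral P measurableT
   (f2 := fun x => ((1 + l * f x)%:E + (c * (A x + B x))%:E)%E) _ _ _ _)).
- by move=> x _; rewrite lee_fin expR_ge0.
- exact/measurable_EFinP.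
- by apply: emeasurable_funD; apply: (measurable_int P).
- by move=> x _; rewrite -EFinD lee_fin.
rewrite integralD // integral_1Dscale.
apply: (le_trans (leeD2l _ tail_le)).
have -> : c * (2 * K) = 64 * K * (l / s) ^+ 2 by rewrite /c; ring.
by rewrite -EFinD.
Qed.

Variables (C D : R).
Hypotheses (C0 : 0 <= C) (D0 : 0 <= D).
Hypothesis mgf_pos : forall l, 0 < l ->
  (\int[P]_x (expR (l * f x))%:E <= (C * expR (l ^+ 2 * D ^+ 2 / 2))%:E)%E.
Hypothesis mgf_neg : forall l, 0 < l ->
  (\int[P]_x (expR (l * - f x))%:E <= (C * expR (l ^+ 2 * D ^+ 2 / 2))%:E)%E.

Let C_expR2_ge0 : 0 <= 64 * C * expR 2.
Proof. by rewrite mulr_ge0 ?expR_ge0 // mulr_ge0. Qed.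

Lemma mgf_le_1Dsqr_scale (s l : R) : 0 < l -> l <= s -> s * D <= 1 ->
  (\int[P]_x (expR (l * f x))%:E <= (1 + 64 * C * expR 2 * (l / s) ^+ 2)%:E)%E.
Proof.
move=> l0 ls sD.
have s0 : 0 < 2 * s by have := lt_le_trans l0 ls; lra.
have exp_le : C * expR ((2 * s) ^+ 2 * D ^+ 2 / 2) <= C * expR 2.
  rewrite ler_wpM2l // ler_expR.
  have -> : (2 * s) ^+ 2 * D ^+ 2 / 2 = 2 * (s * D) ^+ 2 by field.
  have : 0 <= s * D by apply: mulr_ge0 => //; lra.
  nra.
rewrite -(mulrA 64); apply: mgf_le_1Dsqr => //.
  by apply: (le_trans (mgf_pos _ s0)); rewrite lee_fin.
by apply: (le_trans (mgf_neg _ s0)); rewrite lee_fin.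
Qed.

Lemma mgf_small_scale (l : R) : 0 < l -> l * D <= 1 ->
  (\int[P]_x (expR (l * f x))%:E <= (1 + 64 * C * expR 2 * (l * D) ^+ 2)%:E)%E.
Proof.
move=> l0 lD.
have [D_eq0|Dn0] := eqVneq D 0.
  rewrite D_eq0 mulr0 expr0n mulr0 addr0.
  apply: (@lee_of_forall_le_addr_divr_sqr _ _ _ (64 * C * expR 2 * l ^+ 2) l).
    by rewrite mulr_ge0 ?sqr_ge0.
  move=> s ls; rewrite -mulrA -expr_div_n.
  by apply: mgf_le_1Dsqr_scale; rewrite // D_eq0 mulr0.
have Dp : 0 < D by rewrite lt_neqAle eq_sym Dn0 D0.
have -> : l * D = l / D^-1 by rewrite invrK.
apply: mgf_le_1Dsqr_scale => //; first by rewrite -div1r ler_pdivlMr // mul1r.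
by rewrite mulVf ?gt_eqF.
Qed.

Lemma mgf_subgaussian_scaled (eps l : R) :
  1 + 2 * (64 * C * expR 2 + C) <= eps -> 0 < l ->
  (\int[P]_x (expR (l * f x))%:E <= (expR (l ^+ 2 * (eps * D) ^+ 2 / 2))%:E)%E.
Proof.
move=> eps_ge l0.
move: C0 eps_ge C_expR2_ge0 (mgf_small_scale _ l0).
move: (64 * C * expR 2) => M C_ge0 eps_ge M0 small.
have eps_sqr : eps <= eps ^+ 2 by rewrite expr2 ler_peMl //; lra.
have -> : l ^+ 2 * (eps * D) ^+ 2 / 2 = eps ^+ 2 * (l * D) ^+ 2 / 2 by ring.
have [lD|lD] := lerP (l * D) 1; last first.
  apply: (le_trans (mgf_pos _ l0)); rewrite lee_fin -exprMn.
  by apply: mulr_expR_le_expR => //; [nra | lra].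
apply: (le_trans (small lD)); rewrite lee_fin.
apply: (le_trans (expR_ge1Dx _)); rewrite ler_expR.
have := sqr_ge0 (l * D); nra.
Qed.

End CenteredMgf.

Theorem lemmaA1 (d : measure_display) (T : measurableType d) (R : realType)
  (P : probability T R) (Θ : Type) (dd : Θ -> Θ -> R) (X : Θ -> {RV P >-> R}) :
  semimetric dd -> totally_bounded_sm dd ->
  nearly_subgaussian_field X dd ->
  exists eps : R, 1 < eps /\ subgaussian_field X (fun th vt => eps * dd th vt).
Proof.
move=> [dd_ge0 _ dd_sym _] _ [centered [C [C1 mgf_le]]].
exists (1 + 2 * (64 * C * expR 2 + C)); split.
  have : 0 <= 64 * C * expR 2 by rewrite mulr_ge0 ?expR_ge0 // mulr_ge0 //; lra.
  lra.
split => // th vt l l0.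
have [int_th mean_th] := centered th; have [int_vt mean_vt] := centered vt.
pose f x := X th x - X vt x.
have f_int : P.-integrable setT (EFin \o f).
  by apply: eq_integrable (integrableB _ int_th int_vt) => // x _; rewrite /= EFinB.
have f_centered : (\int[P]_x (f x)%:E = 0)%E.
  rewrite (eq_integral (fun x => ((X th x)%:E - (X vt x)%:E)%E)); last first.
    by move=> x _; rewrite EFinB.
  by rewrite integralB_EFin // -!expectation_def mean_th mean_vt subee.
apply: (@mgf_subgaussian_scaled _ _ _ _ _ f_int f_centered C (dd th vt)) => //.
- lra.
- exact: mgf_le.
- move=> k k0; rewrite dd_sym.
  under eq_integral do rewrite /f opprB.
  exact: mgf_le.
Qed.
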